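(* Let $\mathcal{C}$ be an abelian category and $\mathcal{A}$ the abelian category whose objects are complexes $[A\xrightarrow{f}B\xrightarrow{g}C]$ in $\mathcal{C}$ (degrees $-2,-1,0$) with $f$ injective and $\operatorname{Ker} g=\operatorname{Im} f$, morphisms being chain maps modulo homotopy. If $[D\to I\to J]$ is an object of $\mathcal{A}$ with $I$ and $J$ injective objects of $\mathcal{C}$, then $[D\to I\to J]$ is an injective object of $\mathcal{A}$.
   Context: $\mathcal{A}$ is the heart of the $t$-structure on $K^b(\mathcal{C})$ with $D^{\leq 0}=\{X: X^i=0,\ i>0\}$ and $D^{\geq 0}=\{X: X^i=0,\ i<-2,\ H^{-2}(X)=H^{-1}(X)=0\}$. *)

From mathcomp Require Import all_boot all_algebra.
Set Implicit Arguments. Unset Strict Implicit. Unset Printing Implicit Defensive.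
Import GRing.Theory.
Local Open Scope ring_scope.

Record PreAdd := {
  Ob : Type;
  Hom : Ob -> Ob -> zmodType;
  comp : forall X Y Z : Ob, Hom Y Z -> Hom X Y -> Hom X Z;
  idm : forall X : Ob, Hom X X;
  compA : forall X Y Z W (h : Hom Z W) (g : Hom Y Z) (f : Hom X Y),
      comp h (comp g f) = comp (comp h g) f;
  comp1m : forall X Y (f : Hom X Y), comp (idm Y) f = f;
  compm1 : forall X Y (f : Hom X Y), comp f (idm X) = f;
  compDl : forall X Y Z (g1 g2 : Hom Y Z) (f : Hom X Y),
      comp (g1 + g2) f = comp g1 f + comp g2 f;
  compDr : forall X Y Z (g : Hom Y Z) (f1 f2 : Hom X Y),
      comp g (f1 + f2) = comp g f1 + comp g f2
}.

Arguments comp {p X Y Z}.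
Arguments idm {p}.
Arguments Hom : clear implicits.

Section Basic.
Variable C : PreAdd.

Definition mono X Y (f : Hom C X Y) : Prop :=
  forall W (u v : Hom C W X), comp f u = comp f v -> u = v.
Definition epi X Y (f : Hom C X Y) : Prop :=
  forall W (u v : Hom C Y W), comp u f = comp v f -> u = v.

Definition is_kernel X Y K (f : Hom C X Y) (k : Hom C K X) : Prop :=
  comp f k = 0 /\
  forall W (h : Hom C W X), comp f h = 0 ->
    exists u : Hom C W K, comp k u = h /\ forall u', comp k u' = h -> u' = u.

Definition is_cokernel X Y Q (f : Hom C X Y) (q : Hom C Y Q) : Prop :=
  comp q f = 0 /\
  forall W (h : Hom C Y W), comp h f = 0 ->
    exists u : Hom C Q W, comp u q = h /\ forall u', comp u' q = h -> u' = u.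

Definition is_zero_obj (Z : Ob C) : Prop := idm Z = 0.

Definition is_biproduct (X Y P : Ob C) (i1 : Hom C X P) (i2 : Hom C Y P)
  (p1 : Hom C P X) (p2 : Hom C P Y) : Prop :=
  [/\ comp p1 i1 = idm X, comp p2 i2 = idm Y, comp p1 i2 = 0, comp p2 i1 = 0
    & comp i1 p1 + comp i2 p2 = idm P].

Definition abelian : Prop :=
  (exists Z, is_zero_obj Z) /\ [/\
      forall X Y, exists P i1 i2 p1 p2, @is_biproduct X Y P i1 i2 p1 p2,
      forall X Y (f : Hom C X Y), exists K (k : Hom C K X), is_kernel f k,
      forall X Y (f : Hom C X Y), exists Q (q : Hom C Y Q), is_cokernel f q,
      forall X Y (f : Hom C X Y), mono f -> exists Z (g : Hom C Y Z), is_kernel g f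
    & forall X Y (f : Hom C X Y), epi f -> exists Z (g : Hom C Z X), is_cokernel g f].

Definition injective_obj (I : Ob C) : Prop :=
  forall X Y (m : Hom C X Y) (f : Hom C X I), mono m ->
    exists g : Hom C Y I, comp g m = f.

(* Objects of A: complexes [A --f--> B --g--> C] (degrees -2,-1,0) with f
   injective (mono) and Ker g = Im f, i.e. f is a kernel of g. *)
Record AObj := {
  cA : Ob C; cB : Ob C; cC : Ob C;
  cf : Hom C cA cB; cg : Hom C cB cC;
  cf_mono : mono cf;
  c_exact : is_kernel cg cf
}.

Record CMap (X Y : AObj) := {
  m2 : Hom C (cA X) (cA Y);
  m1 : Hom C (cB X) (cB Y);
  m0 : Hom C (cC X) (cC Y)
}.

Definition is_chain X Y (u : CMap X Y) : Prop :=
  comp (m1 u) (cf X) = comp (cf Y) (m2 u) /\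
  comp (m0 u) (cg X) = comp (cg Y) (m1 u).

Definition ccomp X Y Z (v : CMap Y Z) (u : CMap X Y) : CMap X Z :=
  {| m2 := comp (m2 v) (m2 u); m1 := comp (m1 v) (m1 u); m0 := comp (m0 v) (m0 u) |}.

Definition homotopic X Y (u v : CMap X Y) : Prop :=
  exists (h1 : Hom C (cB X) (cA Y)) (h0 : Hom C (cC X) (cB Y)),
    [/\ m2 u - m2 v = comp h1 (cf X),
        m1 u - m1 v = comp (cf Y) h1 + comp h0 (cg X)
      & m0 u - m0 v = comp (cg Y) h0].

Definition A_mono X Y (u : CMap X Y) : Prop :=
  forall W (v w : CMap W X), is_chain v -> is_chain w ->
    homotopic (ccomp u v) (ccomp u w) -> homotopic v w.

Definition A_injective (E : AObj) : Prop :=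
  forall X Y (i : CMap X Y) (phi : CMap X E),
    is_chain i -> A_mono i -> is_chain phi ->
    exists psi : CMap Y E, is_chain psi /\ homotopic (ccomp psi i) phi.

End Basic.

(* Let i : X -> Y be a monomorphism of A and phi : X -> E = [D -> I -> J] a
   chain map.  Testing i against the complexes [0 -> 0 -> K] shows that a map
   c : K -> C_X is a boundary (c = g_X a) as soon as (m0 i) c is one.  Apply
   this to the kernel K of s = (g_Y, m0 i) : B_Y (+) C_X -> C_Y: injectivity
   of I extends -(m1 phi) a along K -> B_Y (+) C_X to some chi, the map
   g_E chi + (m0 phi) p2 then kills K, so injectivity of J extends it along s
   to p : C_Y -> J.  The components of chi and p are the degree -1 and 0 parts
   of the extension of phi, and exactness of E supplies the missing degree -2
   part and the homotopy. *)
From mathcomp Require Import all_boot all_algebra.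
Set Implicit Arguments. Unset Strict Implicit. Unset Printing Implicit Defensive.
Import GRing.Theory.
Local Open Scope ring_scope.

Section Preadditive.
Variable C : PreAdd.

Lemma comp0r X Y Z (g : Hom C Y Z) : comp g (0 : Hom C X Y) = 0.
Proof.
have H := compDr g (0 : Hom C X Y) 0; rewrite addr0 in H.
by apply: (addrI (comp g (0 : Hom C X Y))); rewrite addr0 -H.
Qed.

Lemma comp0l X Y Z (f : Hom C X Y) : comp (0 : Hom C Y Z) f = 0.
Proof.
have H := compDl (0 : Hom C Y Z) 0 f; rewrite addr0 in H.
by apply: (addrI (comp (0 : Hom C Y Z) f)); rewrite addr0 -H.
Qed.

Lemma compNl X Y Z (g : Hom C Y Z) (f : Hom C X Y) : comp (- g) f = - comp g f.
Proof. by apply: (addrI (comp g f)); rewrite -compDl !subrr comp0l. Qed.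

Lemma compNr X Y Z (g : Hom C Y Z) (f : Hom C X Y) : comp g (- f) = - comp g f.
Proof. by apply: (addrI (comp g f)); rewrite -compDr !subrr comp0r. Qed.

Lemma compBl X Y Z (g1 g2 : Hom C Y Z) (f : Hom C X Y) :
  comp (g1 - g2) f = comp g1 f - comp g2 f.
Proof. by rewrite compDl compNl. Qed.

Lemma compBr X Y Z (g : Hom C Y Z) (f1 f2 : Hom C X Y) :
  comp g (f1 - f2) = comp g f1 - comp g f2.
Proof. by rewrite compDr compNr. Qed.

Lemma mono_comp X Y Z (g : Hom C Y Z) (f : Hom C X Y) :
  mono g -> mono f -> mono (comp g f).
Proof. by move=> mg mf W u v; rewrite -!compA => /mg /mf. Qed.

Lemma kernel_mono X Y K (f : Hom C X Y) (k : Hom C K X) : is_kernel f k -> mono k.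
Proof.
move=> [fk0 univ] W u v ku_kv.
have fku0 : comp f (comp k u) = 0 by rewrite compA fk0 comp0l.
have [w [_ uniq_w]] := univ W _ fku0.
by rewrite (uniq_w u) // (uniq_w v).
Qed.

Lemma zero_obj_hom_to (Z : Ob C) W (u : Hom C W Z) : is_zero_obj Z -> u = 0.
Proof. by move=> HZ; rewrite -[u]comp1m HZ comp0l. Qed.

End Preadditive.

Section Abelian.
Variables (C : PreAdd) (HC : abelian C).

Lemma coimage_epi X Y R I (s : Hom C X Y) (c : Hom C Y R) (m : Hom C I Y)
    (e : Hom C X I) :
  is_cokernel s c -> is_kernel c m -> comp m e = s -> epi e.
Proof.
case: HC => _ [_ Hker _ Hmono_ker _] [_ univ_c] Hm me W u v ue_ve.
suff t0 : u - v = 0 by apply/eqP; rewrite -subr_eq0; apply/eqP.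
set t := u - v.
have te0 : comp t e = 0 by rewrite /t compBl ue_ve subrr.
have [K' [j [tj0 univ_j]]] := Hker _ _ t.
have [e' [je' _]] := univ_j _ e te0.
have mj_mono : mono (comp m j).
  exact: mono_comp (kernel_mono Hm) (kernel_mono (conj tj0 univ_j)).
have [Z [r [rmj0 univ_r]]] := Hmono_ker _ _ _ mj_mono.
have rs0 : comp r s = 0 by rewrite -me -je' [comp m _]compA compA rmj0 comp0l.
have [r' [r'c _]] := univ_c _ r rs0.
have rm0 : comp r m = 0 by rewrite -r'c -compA (proj1 Hm) comp0r.
have [w [mjw _]] := univ_r _ m rm0.
have jw : comp j w = idm _ by apply: (kernel_mono Hm); rewrite compA mjw compm1.
by rewrite -[t]compm1 -jw compA tj0 comp0l.
Qed.

(* Factor s through its image m = ker (coker s) and extend along the mono m;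
   the epi part e of s is the cokernel of its own kernel, through which
   psi factors. *)
Lemma injective_extend_along_kernel N Y J K (s : Hom C N Y) (k : Hom C K N)
    (psi : Hom C N J) :
  is_kernel s k -> injective_obj J -> comp psi k = 0 ->
  exists p : Hom C Y J, comp p s = psi.
Proof.
case: HC => _ [_ Hker Hcok _ Hepi] [_ univ_k] HJ psik0.
have [R [c Hc]] := Hcok _ _ s.
have [I [m Hm]] := Hker _ _ c.
have [e [me _]] := proj2 Hm _ s (proj1 Hc).
have [Z [g [eg0 univ_g]]] := Hepi _ _ e (coimage_epi Hc Hm me).
have sg0 : comp s g = 0 by rewrite -me -compA eg0 comp0r.
have [u' [ku' _]] := univ_k _ g sg0.
have psig0 : comp psi g = 0 by rewrite -ku' compA psik0 comp0l.
have [u [ue _]] := univ_g _ psi psig0.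
have [p pm] := HJ _ _ m u (kernel_mono Hm).
by exists p; rewrite -me compA pm.
Qed.

End Abelian.

Section ConcentratedInDegree0.
Variables (C : PreAdd) (Z : Ob C) (HZ : is_zero_obj Z).

Lemma zero_obj_mono : mono (0 : Hom C Z Z).
Proof. by move=> W u v _; rewrite (zero_obj_hom_to u HZ) (zero_obj_hom_to v HZ). Qed.

Lemma zero_obj_is_kernel (K : Ob C) : is_kernel (0 : Hom C Z K) (0 : Hom C Z Z).
Proof.
split=> [|W h _]; first by rewrite comp0l.
exists h; split=> [|u' _]; last by rewrite (zero_obj_hom_to u' HZ) (zero_obj_hom_to h HZ).
by rewrite (zero_obj_hom_to (comp 0 h) HZ) (zero_obj_hom_to h HZ).
Qed.

Definition concentrated0 (K : Ob C) : AObj C :=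
  {| cA := Z; cB := Z; cC := K; cf := 0; cg := 0;
     cf_mono := zero_obj_mono; c_exact := zero_obj_is_kernel K |}.

Lemma A_mono_boundary X Y (i : CMap X Y) K (c : Hom C K (cC X)) (b : Hom C K (cB Y)) :
  A_mono i -> comp (m0 i) c = comp (cg Y) b ->
  exists a : Hom C K (cB X), c = comp (cg X) a.
Proof.
move=> i_mono ic_bd.
pose test (c' : Hom C K (cC X)) := @Build_CMap C (concentrated0 K) X 0 0 c'.
have test_chain c' : is_chain (test c') by split; rewrite /= ?comp0l ?comp0r.
have : homotopic (ccomp i (test c)) (ccomp i (test 0)).
  by exists 0, b; rewrite /= !comp0r !subr0 ic_bd addr0.
case/(i_mono _ _ _ (test_chain c) (test_chain 0)) => _ [a [_ _]].
by rewrite /= subr0; exists a.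
Qed.

End ConcentratedInDegree0.

Section ExtensionUpToHomotopy.
Variables (C : PreAdd) (E X Y : AObj C) (i : CMap X Y) (phi : CMap X E).
Hypotheses (i_chain : is_chain i) (phi_chain : is_chain phi).
Variables (x1 : Hom C (cB Y) (cB E)) (x2 : Hom C (cC X) (cB E))
  (p : Hom C (cC Y) (cC E)).
Hypotheses (p_gY : comp p (cg Y) = comp (cg E) x1)
  (p_i0 : comp p (m0 i) = m0 phi + comp (cg E) x2).

Lemma extension_up_to_homotopy :
  exists psi : CMap Y E, is_chain psi /\ homotopic (ccomp psi i) phi.
Proof.
have [[_ univ_fE] [gfY0 _]] := (c_exact E, c_exact Y).
have [gfX0 _] := c_exact X.
have [i_chain1 i_chain0] := i_chain; have [phi_chain1 phi_chain0] := phi_chain.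
have : comp (cg E) (comp x1 (cf Y)) = 0 by rewrite compA -p_gY -compA gfY0 comp0r.
case/univ_fE => psi2 [fE_psi2 _].
exists (@Build_CMap C Y E psi2 x1 p); split; first by split; rewrite /= ?fE_psi2.
set h := comp x1 (m1 i) - m1 phi - comp x2 (cg X).
have : comp (cg E) h = 0.
  have gE_x1_i1 : comp (cg E) (comp x1 (m1 i)) =
      comp (m0 phi) (cg X) + comp (comp (cg E) x2) (cg X).
    by rewrite compA -p_gY -compA -i_chain0 compA p_i0 compDl.
  rewrite /h !compBr gE_x1_i1 -phi_chain0 [comp (cg E) (comp x2 _)]compA.
  by rewrite addrAC addrK subrr.
case/univ_fE => h1 [fE_h1 _].
exists h1, x2; split => /=.
- apply: (@cf_mono C E).
  rewrite compBr compA fE_psi2 -phi_chain1 [comp (cf E) (comp h1 _)]compA fE_h1.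
  rewrite -[comp (comp x1 (cf Y)) _]compA -i_chain1 compA /h !compBl.
  by rewrite -[comp (comp x2 (cg X)) (cf X)]compA gfX0 comp0r subr0.
- by rewrite fE_h1 /h subrK.
- by rewrite p_i0 addrC addKr.
Qed.

End ExtensionUpToHomotopy.

Lemma injective_degree0_data (C : PreAdd) (HC : abelian C) (E X Y : AObj C)
    (i : CMap X Y) (phi : CMap X E) :
  injective_obj (cB E) -> injective_obj (cC E) -> A_mono i -> is_chain phi ->
  exists (x1 : Hom C (cB Y) (cB E)) (x2 : Hom C (cC X) (cB E))
         (p : Hom C (cC Y) (cC E)),
    comp p (cg Y) = comp (cg E) x1 /\ comp p (m0 i) = m0 phi + comp (cg E) x2.
Proof.
move=> HI HJ i_mono [_ phi_chain0].
have [[Z HZ] [Hbip Hker _ _ _]] := HC.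
have [N [in1 [in2 [p1 [p2 [p1in1 p2in2 p1in2 p2in1 _]]]]]] := Hbip (cB Y) (cC X).
set s := comp (cg Y) p1 + comp (m0 i) p2.
have [K [k Hk]] := Hker _ _ s.
have [a p2k_bd] : exists a, comp p2 k = comp (cg X) a.
  apply: (A_mono_boundary HZ (b := - comp p1 k) i_mono); apply/eqP.
  by rewrite compNr -addr_eq0 addrC !compA -compDl (proj1 Hk).
have [chi chi_k] := HI _ _ k (- comp (m1 phi) a) (kernel_mono Hk).
set psi := comp (cg E) chi + comp (m0 phi) p2.
have psi_k0 : comp psi k = 0.
  by rewrite /psi compDl -!compA chi_k p2k_bd compNr !compA phi_chain0 addNr.
have [p p_s] := injective_extend_along_kernel HC Hk HJ psi_k0.
exists (comp chi in1), (comp chi in2), p; split.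
- have <- : comp s in1 = cg Y by rewrite /s compDl -!compA p1in1 p2in1 compm1 comp0r addr0.
  by rewrite compA p_s /psi compDl -!compA p2in1 comp0r addr0.
- have <- : comp s in2 = m0 i by rewrite /s compDl -!compA p1in2 p2in2 comp0r add0r compm1.
  by rewrite compA p_s /psi compDl -!compA p2in2 compm1 addrC.
Qed.

Theorem proposition3p2 (C : PreAdd) (HC : abelian C) (E : AObj C) :
  injective_obj (cB E) -> injective_obj (cC E) -> A_injective E.
Proof.
move=> HI HJ X Y i phi i_chain i_mono phi_chain.
have [x1 [x2 [p [p_gY p_i0]]]] := injective_degree0_data HC HI HJ i_mono phi_chain.
exact (extension_up_to_homotopy i_chain phi_chain p_gY p_i0).
Qed.
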